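(* The category $\mathbf{STDMT}$ of spatial $T_D$-algebras and MT-morphisms is a full reflective subcategory of the category $\mathbf{MT_D}$ of MT-algebras and D-morphisms. For each MT-algebra $M$, the reflection is the D-morphism $\chi_M:M\to\mathcal P\,\mathrm{at}_D M$, $\chi_M(a)=\{x\in\mathrm{at}_D M: x\le a\}$: for every D-morphism $f:M\to N$ with $N$ a spatial $T_D$-algebra there is a unique MT-morphism $\widehat f:\mathcal P\,\mathrm{at}_DM\to N$ with $\widehat f\circ\chi_M=f$ (namely $\widehat f(S)=\bigvee\{f(x):x\in S\}$).
   Context: An MT-algebra is a pair $(M,\square)$ where $M$ is a complete boolean algebra and $\square:M\to M$ satisfies $\square 1=1$, $\square(a\wedge b)=\square a\wedge\square b$, $\square a\le a$, $\square a\le\square\square a$; $\Diamond a=\neg\square\neg a$; open: $\square a=a$; locally closed: $a=\square b\wedge\Diamond c$; $\mathcal O M$ the set of open elements. $M$ is a $T_D$-algebra if every element is a join of locally closed elements. $\mathrm{at}\,M$ is the set of atoms with topology $\{\eta_M(u):u\in\mathcal OM\}$, $\eta_M(a)=\{x\in\mathrm{at}\,M:x\le a\}$; $M$ is spatial if $\eta_M:M\to\mathcal P(\mathrm{at}\,M)$ is injective. $\mathrm{at}_DM$ is the subspace of locally closed atoms; $\mathcal P\,\mathrm{at}_DM$ is its powerset MT-algebra (interior = topological interior in $\mathrm{at}_DM$; its opens are exactly $\chi_M[\mathcal O M]$). An MT-morphism is a complete boolean homomorphism $h$ with $h(\square a)\le\square h(a)$; its left adjoint is $h^*(b)=\bigwedge\{a:b\le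 h(a)\}$; $h$ is a D-morphism if $h^*$ maps locally closed atoms to locally closed atoms. *)

Record MTAlg : Type := MkMTAlg {
  car : Type;
  le  : car -> car -> Prop;
  sup : (car -> Prop) -> car;
  inf : (car -> Prop) -> car;
  neg : car -> car;
  box : car -> car
}.

Section Ops.
Variable M : MTAlg.
Definition bot : car M := sup M (fun _ => False).
Definition top : car M := inf M (fun _ => False).
Definition join (a b : car M) : car M := sup M (fun x => x = a \/ x = b).
Definition meet (a b : car M) : car M := inf M (fun x => x = a \/ x = b).
Definition dia (a : car M) : car M := neg M (box M (neg M a)).
Definition is_open (a : car M) : Prop := box M a = a.
Definition locally_closed (a : car M) : Prop :=
  exists b c, a = meet (box M b) (dia c).
Definition is_atom (x : car M) : Prop :=
  x <> bot /\ forall y, le M y x -> y = bot \/ y = x.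

(** Axioms: complete boolean algebra + interior operator (S4). *)
Definition is_MT : Prop :=
  (forall a, le M a a) /\
  (forall a b c, le M a b -> le M b c -> le M a c) /\
  (forall a b, le M a b -> le M b a -> a = b) /\
  (forall (P : car M -> Prop) x, P x -> le M x (sup M P)) /\
  (forall (P : car M -> Prop) b, (forall x, P x -> le M x b) -> le M (sup M P) b) /\
  (forall (P : car M -> Prop) x, P x -> le M (inf M P) x) /\
  (forall (P : car M -> Prop) b, (forall x, P x -> le M b x) -> le M b (inf M P)) /\
  (forall a b c, meet a (join b c) = join (meet a b) (meet a c)) /\
  (forall a, meet a (neg M a) = bot) /\
  (forall a, join a (neg M a) = top) /\
  box M top = top /\
  (forall a b, box M (meet a b) = meet (box M a) (box M b)) /\
  (forall a, le M (box M a) a) /\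
  (forall a, le M (box M a) (box M (box M a))).

Definition TD : Prop :=
  forall a, exists S : car M -> Prop,
    (forall x, S x -> locally_closed x) /\ a = sup M S.

Definition spatial : Prop :=
  forall a b, (forall x, is_atom x -> (le M x a <-> le M x b)) -> a = b.
End Ops.

Definition image {M N : MTAlg} (h : car M -> car N) (P : car M -> Prop)
  : car N -> Prop := fun y => exists x, P x /\ y = h x.

Definition MT_morphism {M N : MTAlg} (h : car M -> car N) : Prop :=
  (forall P, h (sup M P) = sup N (image h P)) /\
  (forall P, h (inf M P) = inf N (image h P)) /\
  (forall a, h (neg M a) = neg N (h a)) /\
  (forall a, le N (h (box M a)) (box N (h a))).

Definition ladj {M N : MTAlg} (h : car M -> car N) (b : car N) : car M :=
  inf M (fun a => le N b (h a)).

Definition D_morphism {M N : MTAlg} (h : car M -> car N) : Prop :=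
  MT_morphism h /\
  forall x : car N, is_atom N x -> locally_closed N x ->
    is_atom M (ladj h x) /\ locally_closed M (ladj h x).

Definition atD (M : MTAlg) : Type :=
  { x : car M | is_atom M x /\ locally_closed M x }.

(** Open subsets of the space at_D M: the sets chi_M(u), u open in M. *)
Definition atD_open {M : MTAlg} (U : atD M -> Prop) : Prop :=
  exists u, is_open M u /\ forall y : atD M, U y <-> le M (proj1_sig y) u.

(** The powerset MT-algebra P at_D M, interior = topological interior. *)
Definition PatD (M : MTAlg) : MTAlg := {|
  car := atD M -> Prop;
  le  := fun S T => forall x, S x -> T x;
  sup := fun F x => exists S, F S /\ S x;
  inf := fun F x => forall S, F S -> S x;
  neg := fun S x => ~ S x;
  box := fun S x => exists U, atD_open U /\ (forall y, U y -> S y) /\ U x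
|}.

Definition chi (M : MTAlg) (a : car M) : car (PatD M) :=
  fun y : atD M => le M (proj1_sig y) a.

(* For any MT-morphism h the left adjoint h^* sends atoms to atoms, and in a
   T_D-algebra every atom is locally closed; this gives fullness.

   In a complete boolean algebra every atom is completely join-prime, and in
   a spatial algebra N an element is determined by the atoms below it.  For a
   D-morphism f : M -> N and an atom z of N (locally closed, N being T_D), the
   left adjoint f^*(z) is a locally closed atom of M, and z <= f(a) holds iff
   f^*(z) <= a.  Hence z lies below fhat(S) = \/{f x : x in S} iff f^*(z) is in
   S, which turns every identity required of fhat into an identity of subsets
   of at_D M.  Uniqueness holds because every S is the join of the singletons
   chi(x), x in S. *)

From Stdlib Require Import Classical FunctionalExtensionality PropExtensionality ProofIrrelevance.

Lemma pred_ext {T : Type} (P Q : T -> Prop) : (forall x, P x <-> Q x) -> P = Q.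
Proof.
  intros hPQ; apply functional_extensionality; intros x.
  apply propositional_extensionality, hPQ.
Qed.

Section MTAlgebra.
Context {M : MTAlg} (HM : is_MT M).

Local Ltac mt_axiom := let H := fresh in pose proof HM as H; unfold is_MT in H; decompose [and] H; eauto.

Lemma le_refl a : le M a a.
Proof. mt_axiom. Qed.
Lemma le_trans a b c : le M a b -> le M b c -> le M a c.
Proof. mt_axiom. Qed.
Lemma le_antisym a b : le M a b -> le M b a -> a = b.
Proof. mt_axiom. Qed.
Lemma le_sup (P : car M -> Prop) x : P x -> le M x (sup M P).
Proof. mt_axiom. Qed.
Lemma sup_le (P : car M -> Prop) b : (forall x, P x -> le M x b) -> le M (sup M P) b.
Proof. mt_axiom. Qed.
Lemma inf_le (P : car M -> Prop) x : P x -> le M (inf M P) x.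
Proof. mt_axiom. Qed.
Lemma le_inf (P : car M -> Prop) b : (forall x, P x -> le M b x) -> le M b (inf M P).
Proof. mt_axiom. Qed.
Lemma meet_joinDr a b c : meet M a (join M b c) = join M (meet M a b) (meet M a c).
Proof. mt_axiom. Qed.
Lemma meet_negr a : meet M a (neg M a) = bot M.
Proof. mt_axiom. Qed.
Lemma join_negr a : join M a (neg M a) = top M.
Proof. mt_axiom. Qed.
Lemma box_top : box M (top M) = top M.
Proof. mt_axiom. Qed.
Lemma box_meet a b : box M (meet M a b) = meet M (box M a) (box M b).
Proof. mt_axiom. Qed.
Lemma box_le a : le M (box M a) a.
Proof. mt_axiom. Qed.
Lemma box_le_box_box a : le M (box M a) (box M (box M a)).
Proof. mt_axiom. Qed.

Lemma bot_le a : le M (bot M) a.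
Proof. apply sup_le; intros _ []. Qed.
Lemma le_top a : le M a (top M).
Proof. apply le_inf; intros _ []. Qed.
Lemma le_bot_eq a : le M a (bot M) -> a = bot M.
Proof. intros; apply le_antisym; auto using bot_le. Qed.

Lemma meet_lel a b : le M (meet M a b) a.
Proof. apply inf_le; auto. Qed.
Lemma meet_ler a b : le M (meet M a b) b.
Proof. apply inf_le; auto. Qed.
Lemma le_meet a b c : le M c a -> le M c b -> le M c (meet M a b).
Proof. intros; apply le_inf; intros x [-> | ->]; auto. Qed.
Lemma join_le a b c : le M a c -> le M b c -> le M (join M a b) c.
Proof. intros; apply sup_le; intros x [-> | ->]; auto. Qed.
Lemma meetC a b : meet M a b = meet M b a.
Proof. apply le_antisym; apply le_meet; auto using meet_lel, meet_ler. Qed.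
Lemma meet_top a : meet M a (top M) = a.
Proof. apply le_antisym; auto using meet_lel, le_meet, le_refl, le_top. Qed.
Lemma le_meet_eq a b : le M a b -> meet M a b = a.
Proof. intros; apply le_antisym; auto using meet_lel, le_meet, le_refl. Qed.

Lemma le_neg_of_meet_eq_bot a b : meet M a b = bot M -> le M b (neg M a).
Proof.
  intros Eab.
  apply le_trans with (join M (meet M b a) (meet M b (neg M a))).
  - rewrite <- meet_joinDr, join_negr, meet_top; apply le_refl.
  - apply join_le; [rewrite meetC, Eab; apply bot_le | apply meet_ler].
Qed.

Lemma le_neg_eq_bot a c : le M c a -> le M c (neg M a) -> c = bot M.
Proof. intros; apply le_bot_eq; rewrite <- (meet_negr a); apply le_meet; auto. Qed.

Lemma negK a : neg M (neg M a) = a.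
Proof.
  apply le_antisym.
  - apply le_trans with (join M (meet M (neg M (neg M a)) a)
                                 (meet M (neg M (neg M a)) (neg M a))).
    + rewrite <- meet_joinDr, join_negr, meet_top; apply le_refl.
    + apply join_le; [apply meet_ler|].
      rewrite meetC, meet_negr; apply bot_le.
  - apply le_neg_of_meet_eq_bot; rewrite meetC; apply meet_negr.
Qed.

Lemma neg_le a b : le M a b -> le M (neg M b) (neg M a).
Proof.
  intros hab; apply le_neg_of_meet_eq_bot, le_neg_eq_bot with b.
  - apply le_trans with a; auto using meet_lel.
  - apply meet_ler.
Qed.

Lemma box_mono a b : le M a b -> le M (box M a) (box M b).
Proof. intros hab; rewrite <- (le_meet_eq a b hab), box_meet; apply meet_ler. Qed.

Lemma box_open a : is_open M (box M a).
Proof. apply le_antisym; auto using box_le, box_le_box_box. Qed.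

Lemma dia_neg_open u : is_open M u -> dia M (neg M u) = neg M u.
Proof. intros hu; unfold dia; rewrite negK, hu; reflexivity. Qed.

Lemma atom_le_neg z a : is_atom M z -> (le M z (neg M a) <-> ~ le M z a).
Proof.
  intros [hz0 hz]; split.
  - intros hza hza'; apply hz0, le_neg_eq_bot with a; auto.
  - intros hza; apply le_neg_of_meet_eq_bot; rewrite meetC.
    destruct (hz (meet M z a) (meet_lel z a)) as [| Ez]; auto.
    exfalso; apply hza; rewrite <- Ez; apply meet_ler.
Qed.

Lemma atom_le_sup z P :
  is_atom M z -> le M z (sup M P) -> exists x, P x /\ le M z x.
Proof.
  intros hz hzP; apply NNPP; intros hnone.
  apply (proj1 hz), le_neg_eq_bot with z; [apply le_refl|].
  apply le_trans with (sup M P); auto.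
  apply sup_le; intros x hx.
  rewrite <- (negK x); apply neg_le, atom_le_neg; eauto.
Qed.

Lemma atom_le_eq x y : is_atom M x -> is_atom M y -> le M x y -> x = y.
Proof.
  intros hx [_ hy] hxy.
  destruct (hy x hxy) as [E | E]; [destruct (proj1 hx E) | exact E].
Qed.

Lemma TD_atom_locally_closed z : TD M -> is_atom M z -> locally_closed M z.
Proof.
  intros hTD hz; destruct (hTD z) as [S [hS Ez]].
  assert (hzS : le M z (sup M S)) by (rewrite <- Ez; apply le_refl).
  destruct (atom_le_sup z S hz hzS) as [x [hx hzx]].
  replace z with x; auto.
  apply le_antisym; auto; rewrite Ez; apply le_sup; exact hx.
Qed.

End MTAlgebra.

Section Morphisms.
Context {M N : MTAlg} (HM : is_MT M) (HN : is_MT N).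
Context (h : car M -> car N) (hh : MT_morphism h).

Lemma hom_meet a b : h (meet M a b) = meet N (h a) (h b).
Proof.
  destruct hh as (_ & hinf & _); unfold meet; rewrite hinf; f_equal.
  apply pred_ext; intros y; unfold image; split.
  - intros [x [[-> | ->] ->]]; auto.
  - intros [-> | ->]; eauto.
Qed.

Lemma hom_le a b : le M a b -> le N (h a) (h b).
Proof.
  intros hab; rewrite <- (le_meet_eq HM a b hab), hom_meet.
  apply meet_ler; exact HN.
Qed.

Lemma hom_bot : h (bot M) = bot N.
Proof.
  destruct hh as (hsup & _); unfold bot at 1; rewrite hsup.
  apply le_bot_eq, sup_le; auto; intros y [x [[] _]].
Qed.

Lemma hom_open u : is_open M u -> is_open N (h u).
Proof.
  intros hu; apply le_antisym; auto using box_le.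
  apply le_trans with (h (box M u)); auto.
  - rewrite hu; apply le_refl; exact HN.
  - apply hh.
Qed.

Lemma hom_locally_closed a : locally_closed M a -> locally_closed N (h a).
Proof.
  intros [b [c ->]]; exists (h (box M b)), (h (dia M c)).
  rewrite hom_meet; f_equal.
  - symmetry; apply hom_open, box_open; exact HM.
  - assert (Ec : h (dia M c) = neg N (h (box M (neg M c)))) by apply hh.
    rewrite Ec; symmetry; apply dia_neg_open, hom_open, box_open; auto.
Qed.

Lemma ladj_le z a : le N z (h a) -> le M (ladj h z) a.
Proof. intros; apply inf_le; auto. Qed.

Lemma ladj_unit z : le N z (h (ladj h z)).
Proof.
  destruct hh as (_ & hinf & _); unfold ladj; rewrite hinf.
  apply le_inf; auto; intros y [x [hx ->]]; exact hx.
Qed.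

Lemma ladj_atom z : is_atom N z -> is_atom M (ladj h z).
Proof.
  intros hz; split.
  - intros E; apply (proj1 hz), le_bot_eq; auto.
    rewrite <- hom_bot, <- E; apply ladj_unit.
  - intros q hq; destruct (classic (le N z (h q))) as [hzq | hzq].
    + right; apply le_antisym; auto using ladj_le.
    + left; apply le_neg_eq_bot with q; auto using le_refl.
      apply le_trans with (ladj h z); auto; apply ladj_le.
      destruct hh as (_ & _ & hneg & _); rewrite hneg.
      apply atom_le_neg; auto.
Qed.

Lemma atom_le_hom_iff z x :
  is_atom N z -> is_atom M x -> (le N z (h x) <-> ladj h z = x).
Proof.
  intros hz hx; split.
  - intros hzx; apply atom_le_eq; auto using ladj_atom, ladj_le.
  - intros <-; apply ladj_unit.
Qed.

Lemma MT_morphism_D_morphism : TD M -> D_morphism h.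
Proof.
  intros hTD; split; auto; intros z hz _.
  split; auto using TD_atom_locally_closed, ladj_atom.
Qed.

End Morphisms.

Section Powerset.
Context {M : MTAlg} (HM : is_MT M).

Lemma atD_eq (x y : atD M) : proj1_sig x = proj1_sig y -> x = y.
Proof. destruct x, y; simpl; intros ->; f_equal; apply proof_irrelevance. Qed.

Lemma atD_atom (x : atD M) : is_atom M (proj1_sig x).
Proof. exact (proj1 (proj2_sig x)). Qed.

Lemma atD_locally_closed (x : atD M) : locally_closed M (proj1_sig x).
Proof. exact (proj2 (proj2_sig x)). Qed.

Lemma PatD_botE x : bot (PatD M) x <-> False.
Proof. simpl; split; [intros [S [[] _]] | intros []]. Qed.

Lemma PatD_topE x : top (PatD M) x <-> True.
Proof. simpl; split; auto; intros _ S []. Qed.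

Lemma PatD_meetE (A B : car (PatD M)) x : meet (PatD M) A B x <-> A x /\ B x.
Proof.
  simpl; split.
  - intros hAB; split; apply hAB; auto.
  - intros [hA hB] S [-> | ->]; auto.
Qed.

Lemma PatD_joinE (A B : car (PatD M)) x : join (PatD M) A B x <-> A x \/ B x.
Proof.
  simpl; split.
  - intros [S [[-> | ->] hS]]; auto.
  - intros [hA | hB]; eauto.
Qed.

Lemma chi_open u : is_open M u -> atD_open (chi M u).
Proof. intros hu; exists u; split; [exact hu | reflexivity]. Qed.

Lemma PatD_box_top : box (PatD M) (top (PatD M)) = top (PatD M).
Proof.
  apply pred_ext; intros x; rewrite PatD_topE; split; auto; intros _.
  exists (chi M (top M)); repeat split.
  - apply chi_open, box_top; exact HM.
  - intros y _; apply PatD_topE; exact I.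
  - apply le_top; exact HM.
Qed.

Lemma PatD_box_meet (A B : car (PatD M)) :
  box (PatD M) (meet (PatD M) A B) = meet (PatD M) (box (PatD M) A) (box (PatD M) B).
Proof.
  apply pred_ext; intros x; rewrite PatD_meetE; split.
  - intros [U [hU [hUAB hx]]].
    split; exists U; repeat split; auto; intros y hy; apply hUAB, PatD_meetE in hy; tauto.
  - intros [[U [[u [hu hU]] [hUA hxU]]] [V [[v [hv hV]] [hVB hxV]]]].
    exists (chi M (meet M u v)); repeat split.
    + apply chi_open; unfold is_open in *; rewrite box_meet, hu, hv; auto.
    + intros y hy; apply PatD_meetE; split; [apply hUA, hU | apply hVB, hV];
        apply le_trans with (meet M u v); auto using meet_lel, meet_ler.
    + apply le_meet; auto; [apply hU | apply hV]; auto.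
Qed.

Lemma PatD_is_MT : is_MT (PatD M).
Proof.
  repeat apply conj.
  - simpl; auto.
  - simpl; auto.
  - intros A B hAB hBA; apply pred_ext; split; auto.
  - simpl; eauto.
  - intros P B hPB x [S [hS hx]]; exact (hPB S hS x hx).
  - intros P S hS x hx; exact (hx S hS).
  - intros P B hPB x hx S hS; exact (hPB S hS x hx).
  - intros A B C; apply pred_ext; intros x.
    rewrite PatD_joinE, !PatD_meetE, !PatD_joinE; tauto.
  - intros A; apply pred_ext; intros x; rewrite PatD_meetE, PatD_botE; simpl; tauto.
  - intros A; apply pred_ext; intros x; rewrite PatD_joinE, PatD_topE; simpl; tauto.
  - exact PatD_box_top.
  - exact PatD_box_meet.
  - intros A x [U [_ [hUA hx]]]; auto.
  - intros A x [U [hU [hUA hx]]]; exists U; repeat split; auto.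
    intros y hy; exists U; auto.
Qed.

Lemma chi_MT_morphism : MT_morphism (chi M).
Proof.
  repeat apply conj.
  - intros P; apply pred_ext; intros z; unfold chi; simpl; split.
    + intros hz; destruct (atom_le_sup HM _ _ (atD_atom z) hz) as [x [hx hzx]].
      exists (chi M x); split; [exists x; auto | exact hzx].
    + intros [S [[x [hx ->]] hz]]; apply le_trans with x; auto using le_sup.
  - intros P; apply pred_ext; intros z; unfold chi; simpl; split.
    + intros hz S [x [hx ->]]; apply le_trans with (inf M P); auto using inf_le.
    + intros hz; apply le_inf; auto; intros x hx; apply (hz (chi M x)); exists x; auto.
  - intros a; apply pred_ext; intros z; apply atom_le_neg; auto using atD_atom.
  - intros a z hz; exists (chi M (box M a)); repeat split.
    + apply chi_open, box_open; exact HM.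
    + intros y hy; apply le_trans with (box M a); auto using box_le.
    + exact hz.
Qed.

Lemma chi_atD (x : atD M) : chi M (proj1_sig x) = (fun y => y = x).
Proof.
  apply pred_ext; intros y; unfold chi; split.
  - intros hyx; apply atD_eq, atom_le_eq; auto using atD_atom.
  - intros ->; apply le_refl; exact HM.
Qed.

Lemma PatD_sup_chi (S : car (PatD M)) :
  S = sup (PatD M) (fun T => exists x, S x /\ T = chi M (proj1_sig x)).
Proof.
  apply pred_ext; intros z; simpl; split.
  - intros hz; exists (chi M (proj1_sig z)).
    split; [exists z; auto | rewrite chi_atD; reflexivity].
  - intros [T [[x [hx ->]] hz]]; rewrite chi_atD in hz; subst; exact hx.
Qed.

Lemma PatD_TD : TD (PatD M).
Proof.
  intros S; exists (fun T => exists x, S x /\ T = chi M (proj1_sig x)); split.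
  - intros T [x [_ ->]].
    apply (hom_locally_closed HM PatD_is_MT _ chi_MT_morphism), atD_locally_closed.
  - apply PatD_sup_chi.
Qed.

Lemma singleton_atom (x : atD M) : is_atom (PatD M) (fun y => y = x).
Proof.
  split.
  - intros E; apply (PatD_botE x); rewrite <- E; reflexivity.
  - intros Y hY; destruct (classic (Y x)) as [hx | hx].
    + right; apply pred_ext; intros y; split; [apply hY | intros ->; exact hx].
    + left; apply pred_ext; intros y; rewrite PatD_botE; split; [|tauto].
      intros hy; apply hx; rewrite <- (hY y hy); exact hy.
Qed.

Lemma atom_singleton (X : car (PatD M)) :
  is_atom (PatD M) X -> exists x, X = (fun y => y = x).
Proof.
  intros [hX0 hX]; destruct (classic (exists x, X x)) as [[x hx] | hnone].
  - exists x; destruct (hX (fun y => y = x)) as [E | E].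
    + intros y ->; exact hx.
    + exfalso; apply (PatD_botE x); rewrite <- E; reflexivity.
    + symmetry; exact E.
  - exfalso; apply hX0, pred_ext; intros y; rewrite PatD_botE.
    split; [intros hy; apply hnone; eauto | intros []].
Qed.

Lemma PatD_spatial : spatial (PatD M).
Proof.
  intros A B hAB; apply pred_ext; intros z.
  specialize (hAB _ (singleton_atom z)); simpl in hAB.
  split; intros hz; apply hAB; auto; intros y ->; exact hz.
Qed.

Lemma chi_D_morphism : D_morphism (chi M).
Proof.
  split; [exact chi_MT_morphism|]; intros X hX _.
  destruct (atom_singleton X hX) as [x ->]; rewrite <- chi_atD.
  assert (E : ladj (chi M) (chi M (proj1_sig x)) = proj1_sig x).
  { apply le_antisym; auto.
    - apply ladj_le; auto; intros y hy; exact hy.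
    - apply le_inf; auto; intros a ha; apply (ha x), le_refl; exact HM. }
  rewrite E; exact (proj2_sig x).
Qed.

End Powerset.

Definition extension {M N : MTAlg} (f : car M -> car N) (S : car (PatD M)) : car N :=
  sup N (fun y => exists x : atD M, S x /\ y = f (proj1_sig x)).

Section Extension.
Context {M N : MTAlg} (HM : is_MT M) (HN : is_MT N) (spN : spatial N) (tdN : TD N).
Context (f : car M -> car N) (Df : D_morphism f).

Lemma atom_le_extension z :
  is_atom N z -> exists p : atD M,
    proj1_sig p = ladj f z /\ forall S, le N z (extension f S) <-> S p.
Proof.
  intros hz; destruct Df as [hf hD].
  destruct (hD z hz (TD_atom_locally_closed HN z tdN hz)) as [hp hlc].
  exists (exist _ (ladj f z) (conj hp hlc)); split; [reflexivity|]; intros S; split.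
  - intros hzS; destruct (atom_le_sup HN _ _ hz hzS) as [y [[x [hx ->]] hzx]].
    replace (exist _ (ladj f z) (conj hp hlc)) with x; auto.
    apply atD_eq; symmetry; apply (atom_le_hom_iff HM HN f hf); auto using atD_atom.
  - intros hS; apply le_trans with (f (ladj f z)); auto using ladj_unit.
    apply le_sup; auto; exists (exist _ (ladj f z) (conj hp hlc)); auto.
Qed.

Lemma extension_mono (S T : car (PatD M)) :
  le (PatD M) S T -> le N (extension f S) (extension f T).
Proof.
  intros hST; apply sup_le; auto; intros y [x [hx ->]].
  apply le_sup; auto; exists x; auto.
Qed.

Lemma extension_chi a : extension f (chi M a) = f a.
Proof.
  apply spN; intros z hz.
  destruct (atom_le_extension z hz) as [p [Ep hp]].
  rewrite hp; unfold chi; rewrite Ep; split.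
  - intros hza; apply le_trans with (f (ladj f z)); auto.
    + apply ladj_unit; auto; apply Df.
    + apply (hom_le HM HN); auto; apply Df.
  - apply ladj_le; auto.
Qed.

Lemma extension_MT_morphism : MT_morphism (extension f).
Proof.
  repeat apply conj.
  - intros F; apply spN; intros z hz.
    destruct (atom_le_extension z hz) as [p [_ hp]]; rewrite hp; simpl; split.
    + intros [S [hS hSp]]; apply le_trans with (extension f S); auto.
      * apply hp; exact hSp.
      * apply le_sup; auto; exists S; auto.
    + intros hzF; destruct (atom_le_sup HN _ _ hz hzF) as [y [[S [hS ->]] hzS]].
      exists S; split; auto; apply hp; exact hzS.
  - intros F; apply spN; intros z hz.
    destruct (atom_le_extension z hz) as [p [_ hp]]; rewrite hp; simpl; split.
    + intros hFp; apply le_inf; auto; intros y [S [hS ->]]; apply hp, hFp, hS.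
    + intros hzF S hS; apply hp, le_trans with (inf N (image (extension f) F)); auto.
      apply inf_le; auto; exists S; auto.
  - intros S; apply spN; intros z hz.
    destruct (atom_le_extension z hz) as [p [_ hp]].
    rewrite hp, atom_le_neg, hp; simpl; tauto.
  - intros S; apply sup_le; auto; intros y [x [[U [[u [hu hU]] [hUS hx]]] ->]].
    apply le_trans with (f u); auto.
    { apply (hom_le HM HN); [apply Df | apply hU; exact hx]. }
    apply le_trans with (box N (f u)); auto.
    { rewrite (hom_open HN f (proj1 Df) u hu); apply le_refl; exact HN. }
    apply box_mono; auto.
    rewrite <- extension_chi; apply extension_mono; intros w hw; apply hUS, hU, hw.
Qed.

End Extension.

Lemma extension_unique {M N : MTAlg} (HM : is_MT M) (f : car M -> car N)
      (g : car (PatD M) -> car N) :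
  MT_morphism g -> (forall a, g (chi M a) = f a) -> g = extension f.
Proof.
  intros hg hgf; apply functional_extensionality; intros S.
  rewrite (PatD_sup_chi HM S) at 1; rewrite (proj1 hg); unfold extension; f_equal.
  apply pred_ext; intros y; unfold image; split.
  - intros [T [[x [hx ->]] ->]]; rewrite hgf; eauto.
  - intros [x [hx ->]]; exists (chi M (proj1_sig x)); rewrite hgf; eauto.
Qed.

Theorem theorem5p18 :
  (* fullness: MT-morphisms between spatial T_D-algebras are D-morphisms *)
  (forall (M N : MTAlg) (h : car M -> car N),
      is_MT M -> spatial M -> TD M ->
      is_MT N -> spatial N -> TD N ->
      MT_morphism h -> D_morphism h)
  /\
  (* reflection *)
  (forall M : MTAlg, is_MT M ->
      is_MT (PatD M) /\ spatial (PatD M) /\ TD (PatD M) /\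
      D_morphism (chi M) /\
      (forall (N : MTAlg) (f : car M -> car N),
          is_MT N -> spatial N -> TD N -> D_morphism f ->
          let fhat := fun S : car (PatD M) =>
                        sup N (fun y => exists x : atD M, S x /\ y = f (proj1_sig x)) in
          MT_morphism fhat /\
          (forall a, fhat (chi M a) = f a) /\
          (forall g : car (PatD M) -> car N,
              MT_morphism g -> (forall a, g (chi M a) = f a) -> g = fhat))).
Proof.
  split.
  - intros M N h HM _ hTD HN _ _ hh; exact (MT_morphism_D_morphism HM HN h hh hTD).
  - intros M HM.
    refine (conj (PatD_is_MT HM) (conj PatD_spatial
              (conj (PatD_TD HM) (conj (chi_D_morphism HM) _)))).
    intros N f HN spN tdN Df fhat; change fhat with (extension f).
    refine (conj (extension_MT_morphism HM HN spN tdN f Df)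
              (conj (extension_chi HM HN spN tdN f Df) _)).
    intros g hg hgf; exact (extension_unique HM f g hg hgf).
Qed.
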